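(* Suppose the set of extreme points of $\mathrm{New}(A)$ is affinely independent, and that $c\in\mathbb{R}^m$ satisfies $c_i\le 0$ whenever $a_i$ is nonextremal. Then $c\in C_{\mathrm{SAGE}}(A)$ if and only if $c\in C_{\mathrm{NNS}}(A)$.
   Context: Let $A\in\mathbb{R}^{n\times m}$ have distinct columns $a_1,\dots,a_m$. For $c\in\mathbb{R}^m$, $\mathrm{Sig}(A,c)$ denotes the function $x\mapsto\sum_{i=1}^m c_i\exp(a_i^\top x)$ on $\mathbb{R}^n$. $\mathrm{New}(A)=\mathrm{conv}\{a_1,\dots,a_m\}$ is the Newton polytope; $a_i$ is called extremal if it is an extreme point of $\mathrm{New}(A)$ and nonextremal otherwise. $C_{\mathrm{NNS}}(A)=\{c\in\mathbb{R}^m:\mathrm{Sig}(A,c)(x)\ge 0\ \forall x\in\mathbb{R}^n\}$. For $k\in[m]$, the $k$-th AGE cone is $C_{\mathrm{AGE}}(A,k)=\{c\in C_{\mathrm{NNS}}(A): c_i\ge 0\ \forall i\ne k\}$, and the SAGE cone is the Minkowski sum $C_{\mathrm{SAGE}}(A)=\sum_{k=1}^m C_{\mathrm{AGE}}(A,k)$. *)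

From Stdlib Require Import Reals Lra Lia.
Open Scope R_scope.

(* Vectors in R^d are represented by functions nat -> R, only the
   coordinates 0..d-1 being relevant. The matrix A in R^{n x m} is
   given by its columns a : nat -> (nat -> R), a i = a_i (i < m). *)

Fixpoint sumR (d : nat) (f : nat -> R) : R :=
  match d with
  | O => 0
  | S d' => sumR d' f + f d'
  end.

Definition dot (n : nat) (u x : nat -> R) : R := sumR n (fun k => u k * x k).

Definition vec_eq (n : nat) (u v : nat -> R) : Prop := forall k, (k < n)%nat -> u k = v k.

Definition distinct_cols (n m : nat) (a : nat -> nat -> R) : Prop :=
  forall i j, (i < m)%nat -> (j < m)%nat -> i <> j -> ~ vec_eq n (a i) (a j).

Definition Sig (n m : nat) (a : nat -> nat -> R) (c : nat -> R) (x : nat -> R) : R :=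
  sumR m (fun i => c i * exp (dot n (a i) x)).

Definition New (n m : nat) (a : nat -> nat -> R) (p : nat -> R) : Prop :=
  exists lam : nat -> R,
    (forall i, (i < m)%nat -> 0 <= lam i) /\
    sumR m lam = 1 /\
    vec_eq n p (fun k => sumR m (fun i => lam i * a i k)).

Definition is_extreme_point (n : nat) (S : (nat -> R) -> Prop) (p : nat -> R) : Prop :=
  S p /\
  forall y z t, S y -> S z -> 0 < t < 1 ->
    vec_eq n p (fun k => t * y k + (1 - t) * z k) ->
    vec_eq n y p /\ vec_eq n z p.

Definition extremal (n m : nat) (a : nat -> nat -> R) (i : nat) : Prop :=
  is_extreme_point n (New n m a) (a i).

(* the set {a_i : a_i extremal} is affinely independent
   (columns are distinct, so this set is indexed by the extremal i) *)
Definition extreme_pts_aff_indep (n m : nat) (a : nat -> nat -> R) : Prop :=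
  forall mu : nat -> R,
    (forall i, (i < m)%nat -> ~ extremal n m a i -> mu i = 0) ->
    sumR m mu = 0 ->
    (forall k, (k < n)%nat -> sumR m (fun i => mu i * a i k) = 0) ->
    forall i, (i < m)%nat -> mu i = 0.

Definition C_NNS (n m : nat) (a : nat -> nat -> R) (c : nat -> R) : Prop :=
  forall x : nat -> R, 0 <= Sig n m a c x.

Definition C_AGE (n m : nat) (a : nat -> nat -> R) (k : nat) (c : nat -> R) : Prop :=
  C_NNS n m a c /\ forall i, (i < m)%nat -> i <> k -> 0 <= c i.

Definition C_SAGE (n m : nat) (a : nat -> nat -> R) (c : nat -> R) : Prop :=
  exists cs : nat -> nat -> R,
    (forall k, (k < m)%nat -> C_AGE n m a k (cs k)) /\
    forall i, (i < m)%nat -> c i = sumR m (fun k => cs k i).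

From Stdlib Require Import Reals Lra Lia Classical ClassicalEpsilon Bool.
From mathcomp Require all_boot ssralg ssrnum matrix Rstruct Rstruct_topology boolp classical_sets
  set_interval interval topology normedtype derive matrix_normedtype.
Open Scope R_scope.
(* Loading ssreflect switches bullets off globally. *)
Set Bullet Behavior "Strict Subproofs".

(* Write every nonextremal column as a convex combination [a_j = sum_i lam_j_i a_i] of the
   extremal ones. As the extremal columns are affinely independent, the values
   [z_i = exp (a_i . x + s)] at the extremal [i] can be prescribed arbitrarily, so
   [c] is in C_NNS iff the convex, positively homogeneous function
     h(z) = sum_{i extremal} c_i z_i - sum_{j nonextremal} |c_j| prod_i z_i ^ lam_j_i
   is nonnegative on the positive orthant. Let [w] minimize [h] on the simplex. If the support
   of [lam_j] met both the zeros and the positive entries of [w], moving mass onto the zeros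
   would decrease [h] (a power [t ^ al], [al < 1], beats [t]). On the positive entries, the
   first-order conditions give [ell_j_i = |c_j| lam_j_i G_j(w) / w_i] with
   [sum_j ell_j_i <= c_i], and weighted AM-GM gives
   [sum_i ell_j_i exp (y_i) >= |c_j| exp (lam_j . y)]; the zeros of [w] are handled by
   induction on the support. Then [c_j e_j + ell_j] is in the [j]-th AGE cone, and what is
   left of [c] is nonnegative. *)

Lemma sumR_ext d f g : (forall i, (i < d)%nat -> f i = g i) -> sumR d f = sumR d g.
Proof.
  induction d; intros H; simpl; auto.
  rewrite IHd by (intros; apply H; lia). rewrite H by lia. reflexivity.
Qed.

Lemma sumR_add d f g : sumR d (fun i => f i + g i) = sumR d f + sumR d g.
Proof. induction d; simpl; [lra | rewrite IHd; lra]. Qed.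

Lemma sumR_sub d f g : sumR d (fun i => f i - g i) = sumR d f - sumR d g.
Proof. induction d; simpl; [lra | rewrite IHd; lra]. Qed.

Lemma sumR_scal_l d k f : sumR d (fun i => k * f i) = k * sumR d f.
Proof. induction d; simpl; [lra | rewrite IHd; lra]. Qed.

Lemma sumR_scal_r d k f : sumR d (fun i => f i * k) = sumR d f * k.
Proof. induction d; simpl; [lra | rewrite IHd; lra]. Qed.

Lemma sumR_le d f g : (forall i, (i < d)%nat -> f i <= g i) -> sumR d f <= sumR d g.
Proof.
  induction d; intros H; simpl; [lra |].
  assert (sumR d f <= sumR d g) by (apply IHd; intros; apply H; lia).
  assert (f d <= g d) by (apply H; lia). lra.
Qed.

Lemma sumR_eq0 d f : (forall i, (i < d)%nat -> f i = 0) -> sumR d f = 0.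
Proof.
  induction d; intros H; simpl; auto.
  rewrite IHd by (intros; apply H; lia). rewrite H by lia. lra.
Qed.

Lemma sumR_ge0 d f : (forall i, (i < d)%nat -> 0 <= f i) -> 0 <= sumR d f.
Proof.
  intros H. rewrite <- (sumR_eq0 d (fun _ => 0)) by auto. apply sumR_le; auto.
Qed.

Lemma sumR_ge_term d f k : (forall i, (i < d)%nat -> 0 <= f i) -> (k < d)%nat -> f k <= sumR d f.
Proof.
  induction d; intros H Hk; simpl; [lia |].
  assert (0 <= sumR d f) by (apply sumR_ge0; intros; apply H; lia).
  destruct (Nat.eq_dec k d) as [-> | Hne]; [lra |].
  assert (f k <= sumR d f) by (apply IHd; [intros; apply H | ]; lia).
  assert (0 <= f d) by (apply H; lia). lra.
Qed.

Lemma sumR_gt0 d f k : (forall i, (i < d)%nat -> 0 <= f i) -> (k < d)%nat -> 0 < f k -> 0 < sumR d f.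
Proof. intros H Hk Hp. assert (f k <= sumR d f) by (apply sumR_ge_term; auto). lra. Qed.

Lemma sumR_single d k A : (k < d)%nat -> sumR d (fun i => if Nat.eq_dec i k then A else 0) = A.
Proof.
  induction d; intros Hk; simpl; [lia |].
  destruct (Nat.eq_dec d k) as [-> | Hne].
  - rewrite sumR_eq0; [lra |]. intros i Hi. destruct (Nat.eq_dec i k); [lia | auto].
  - rewrite IHd by lia. lra.
Qed.

Definition delta (k i : nat) : R := if Nat.eq_dec i k then 1 else 0.

Lemma delta_sym k i : delta k i = delta i k.
Proof. unfold delta. destruct (Nat.eq_dec i k), (Nat.eq_dec k i); auto; lia. Qed.

Lemma sumR_delta d k f : (k < d)%nat -> sumR d (fun i => delta k i * f i) = f k.
Proof.
  intros Hk. rewrite <- (sumR_single d k (f k) Hk). apply sumR_ext. intros i Hi.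
  unfold delta. destruct (Nat.eq_dec i k) as [-> |]; ring.
Qed.

Lemma sumR_swap m d F :
  sumR m (fun k => sumR d (fun i => F k i)) = sumR d (fun i => sumR m (fun k => F k i)).
Proof.
  induction m; simpl.
  - rewrite sumR_eq0; auto.
  - rewrite IHm, <- sumR_add. reflexivity.
Qed.

Lemma sumR_update d f g k : (k < d)%nat -> (forall i, (i < d)%nat -> i <> k -> f i = g i) ->
  sumR d g = sumR d f + (g k - f k).
Proof.
  intros Hk H. rewrite <- (sumR_single d k (g k - f k) Hk), <- sumR_add.
  apply sumR_ext. intros i Hi. destruct (Nat.eq_dec i k) as [-> | Hne]; [lra |].
  rewrite H; auto; lra.
Qed.

Lemma sumR_prefix K d f : sumR (K + d) (fun i => if Nat.ltb i K then f i else 0) = sumR K f.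
Proof.
  induction d.
  - rewrite Nat.add_0_r. apply sumR_ext. intros i Hi. apply Nat.ltb_lt in Hi. rewrite Hi. auto.
  - rewrite Nat.add_succ_r. simpl. rewrite IHd.
    replace (Nat.ltb (K + d) K) with false by (symmetry; apply Nat.ltb_ge; lia). ring.
Qed.

Lemma sumR_unit_single m mu v k : (forall i, 0 <= mu i) -> sumR m mu = 1 ->
  (v < m)%nat -> mu v = 1 -> (k < m)%nat -> k <> v -> mu k = 0.
Proof.
  intros H0 Hs Hv Hmv Hk Hne.
  set (g := fun x => if Nat.eq_dec x v then 0 else mu x).
  rewrite (sumR_update m g mu v Hv) in Hs.
  2:{ intros i Hi Hiv. unfold g. destruct (Nat.eq_dec i v); [congruence | auto]. }
  assert (g k <= sumR m g).
  { apply sumR_ge_term; auto. intros i Hi. unfold g. destruct (Nat.eq_dec i v); [lra | auto]. }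
  unfold g in *. destruct (Nat.eq_dec k v); [congruence |]. destruct (Nat.eq_dec v v); [| congruence].
  assert (H1 := H0 k). lra.
Qed.

Fixpoint prodR (d : nat) (f : nat -> R) : R :=
  match d with O => 1 | S d' => prodR d' f * f d' end.

Lemma prodR_ext d f g : (forall i, (i < d)%nat -> f i = g i) -> prodR d f = prodR d g.
Proof.
  induction d; intros H; simpl; auto.
  rewrite IHd by (intros; apply H; lia). rewrite H by lia. reflexivity.
Qed.

Lemma prodR_ge0 d f : (forall i, (i < d)%nat -> 0 <= f i) -> 0 <= prodR d f.
Proof.
  induction d; intros H; simpl; [lra |].
  apply Rmult_le_pos; [apply IHd; intros | ]; apply H; lia.
Qed.

Lemma prodR_exp d f g : (forall i, (i < d)%nat -> f i = exp (g i)) -> prodR d f = exp (sumR d g).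
Proof.
  induction d; intros H; simpl.
  - rewrite exp_0; auto.
  - rewrite IHd by (intros; apply H; lia). rewrite H, exp_plus by lia. reflexivity.
Qed.

Lemma prodR_eq0 d f k : (k < d)%nat -> f k = 0 -> prodR d f = 0.
Proof.
  induction d; intros Hk H0; simpl; [lia |].
  destruct (Nat.eq_dec k d) as [-> | Hne].
  - rewrite H0; lra.
  - rewrite IHd; [lra | lia | auto].
Qed.

Lemma prodR_le d f g : (forall i, (i < d)%nat -> 0 <= f i <= g i) -> prodR d f <= prodR d g.
Proof.
  induction d; intros H; simpl; [lra |].
  assert (0 <= prodR d f) by (apply prodR_ge0; intros; apply H; lia).
  assert (prodR d f <= prodR d g) by (apply IHd; intros; apply H; lia).
  destruct (H d ltac:(lia)). apply Rmult_le_compat; auto.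
Qed.

(** * Real powers of nonnegative numbers *)

(* [rpow s l] is [s ^ l] for [s > 0]; for [s <= 0] it is [1] if [l = 0] and [0] otherwise,
   which makes [s |-> rpow s l] continuous on [0, +oo) for [l >= 0]. *)
Definition rpow (s l : R) : R :=
  if Req_EM_T l 0 then 1 else if Rle_dec s 0 then 0 else exp (l * ln s).

Lemma rpow_ge0 s l : 0 <= rpow s l.
Proof.
  unfold rpow. destruct (Req_EM_T l 0); [lra |].
  destruct (Rle_dec s 0); [lra | left; apply exp_pos].
Qed.

Lemma rpow_0_r s : rpow s 0 = 1.
Proof. unfold rpow. destruct (Req_EM_T 0 0); [auto | congruence]. Qed.

Lemma rpow_pos s l : 0 < s -> rpow s l = exp (l * ln s).
Proof.
  intros Hs. destruct (Req_EM_T l 0) as [-> |].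
  - rewrite rpow_0_r, Rmult_0_l, exp_0; auto.
  - unfold rpow. destruct (Req_EM_T l 0); [congruence |].
    destruct (Rle_dec s 0); [lra | auto].
Qed.

Lemma rpow_nonpos s l : l <> 0 -> s <= 0 -> rpow s l = 0.
Proof.
  intros Hl Hs. unfold rpow. destruct (Req_EM_T l 0); [lra |].
  destruct (Rle_dec s 0); [auto | lra].
Qed.

Lemma rpow_le s t l : 0 <= l -> 0 <= s <= t -> rpow s l <= rpow t l.
Proof.
  intros Hl Hst. destruct (Req_EM_T l 0) as [-> | Hl0]; [rewrite !rpow_0_r; lra |].
  destruct (Rle_dec s 0).
  - rewrite (rpow_nonpos s l) by auto. apply rpow_ge0.
  - rewrite !rpow_pos by lra. destruct (Req_dec s t) as [-> |]; [lra |].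
    left. apply exp_increasing, Rmult_lt_compat_l; [lra |]. apply ln_increasing; lra.
Qed.

Lemma rpow_continuity l x : 0 <= l -> continuity_pt (fun s => rpow s l) x.
Proof.
  intros Hl. destruct (Req_EM_T l 0) as [-> | Hl0].
  { apply continuity_pt_locally_ext with (f := fun _ => 1) (a := 1); [lra | | apply continuity_pt_const; intros ? ?; auto].
    intros y _. symmetry. apply rpow_0_r. }
  destruct (Rlt_le_dec 0 x) as [Hx | Hx].
  { apply continuity_pt_locally_ext with (f := fun s => exp (l * ln s)) (a := x); auto.
    - intros y Hy. unfold Rdist in Hy. apply Rabs_def2 in Hy. rewrite rpow_pos by lra. auto.
    - apply (continuity_pt_comp (fun s => l * ln s) exp).
      + apply continuity_pt_mult; [apply continuity_pt_const; intros ? ?; auto |].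
        apply derivable_continuous_pt. exists (/ x). apply derivable_pt_lim_ln; auto.
      + apply derivable_continuous_pt, derivable_pt_exp. }
  destruct (Rlt_le_dec x 0) as [Hx' | Hx'].
  { apply continuity_pt_locally_ext with (f := fun _ => 0) (a := - x); [lra | | apply continuity_pt_const; intros ? ?; auto].
    intros y Hy. unfold Rdist in Hy. apply Rabs_def2 in Hy. rewrite rpow_nonpos by lra. auto. }
  assert (x = 0) by lra. subst x.
  (* at [0]: [rpow y l < eps] as soon as [0 < y < eps ^ (1/l)] *)
  intros eps Heps. exists (exp (ln eps / l)). split; [apply exp_pos |].
  intros y [_ Hy]. simpl in *. unfold R_dist in *.
  rewrite (rpow_nonpos 0 l Hl0 (Rle_refl 0)), Rminus_0_r.
  destruct (Rle_dec y 0) as [Hy0 | Hy0].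
  - rewrite rpow_nonpos, Rabs_R0 by auto. auto.
  - rewrite rpow_pos, Rabs_pos_eq by (try left; try apply exp_pos; lra).
    rewrite Rminus_0_r, Rabs_pos_eq in Hy by lra.
    assert (ln y < ln eps / l) by (rewrite <- (ln_exp (ln eps / l)); apply ln_increasing; lra).
    rewrite <- (exp_ln eps) by auto. apply exp_increasing.
    apply (Rmult_lt_compat_l l) in H; [| lra].
    replace (l * (ln eps / l)) with (ln eps) in H by (field; lra). lra.
Qed.

Fixpoint ntrue (d : nat) (Q : nat -> bool) : nat :=
  match d with O => O | S d' => (ntrue d' Q + (if Q d' then 1 else 0))%nat end.

Lemma ntrue_le d Q S : (forall i, (i < d)%nat -> S i = true -> Q i = true) -> (ntrue d S <= ntrue d Q)%nat.
Proof.
  induction d; intros H; simpl; [lia |].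
  assert (IH := IHd ltac:(intros; apply H; auto; lia)).
  destruct (S d) eqn:E1; [rewrite (H d ltac:(lia) E1) | destruct (Q d)]; lia.
Qed.

Lemma ntrue_lt d Q S : (forall i, (i < d)%nat -> S i = true -> Q i = true) ->
  (exists i, (i < d)%nat /\ Q i = true /\ S i = false) -> (ntrue d S < ntrue d Q)%nat.
Proof.
  induction d; intros H [i [Hi [HQ HS]]]; simpl; [lia |].
  destruct (Nat.eq_dec i d) as [-> | Hne].
  - assert (ntrue d S <= ntrue d Q)%nat by (apply ntrue_le; intros; apply H; auto; lia).
    rewrite HQ, HS. lia.
  - assert (ntrue d S < ntrue d Q)%nat.
    { apply IHd; [intros; apply H; auto; lia | exists i; repeat split; auto; lia]. }
    destruct (S d) eqn:E1; [rewrite (H d ltac:(lia) E1) | destruct (Q d)]; lia.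
Qed.

Lemma ntrue_pos d Q i : (i < d)%nat -> Q i = true -> (0 < ntrue d Q)%nat.
Proof.
  intros Hi HQ.
  assert (H := ntrue_lt d Q (fun _ => false) ltac:(intros; discriminate) ltac:(exists i; auto)).
  lia.
Qed.

(** * The reduced signomial *)

Definition geomean (m : nat) (l z : nat -> R) : R := prodR m (fun i => rpow (z i) (l i)).

(* With [z_i = exp (a_i . x)] for the extremal columns and [a_j = sum_i lam_j_i a_i] for a
   nonextremal one, [exp (a_j . x) = geomean m (lam j) z]. *)
Definition hsig (m : nat) (c d : nat -> R) (lam : nat -> nat -> R) (z : nat -> R) : R :=
  sumR m (fun i => c i * z i) - sumR m (fun j => d j * geomean m (lam j) z).

Definition in_simplex (m : nat) (Q : nat -> bool) (z : nat -> R) : Prop :=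
  (forall i, (i < m)%nat -> 0 <= z i) /\ (forall i, (i < m)%nat -> Q i = false -> z i = 0) /\
  sumR m z = 1.

Lemma geomean_ext m l z z' : (forall i, (i < m)%nat -> z i = z' i) -> geomean m l z = geomean m l z'.
Proof. intros H. apply prodR_ext. intros i Hi. rewrite H; auto. Qed.

Lemma hsig_ext m c d lam z z' : (forall i, (i < m)%nat -> z i = z' i) ->
  hsig m c d lam z = hsig m c d lam z'.
Proof.
  intros H. unfold hsig. f_equal; apply sumR_ext; intros i Hi.
  - rewrite H; auto.
  - rewrite (geomean_ext m (lam i) z z'); auto.
Qed.

Lemma in_simplex_ext m Q z z' : (forall i, (i < m)%nat -> z i = z' i) ->
  in_simplex m Q z -> in_simplex m Q z'.
Proof.
  intros H [H1 [H2 H3]]. split; [| split].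
  - intros i Hi. rewrite <- H; auto.
  - intros i Hi HQ. rewrite <- H; auto.
  - rewrite <- H3. symmetry. apply sumR_ext; auto.
Qed.

Lemma in_simplex_le1 m Q z i : in_simplex m Q z -> (i < m)%nat -> 0 <= z i <= 1.
Proof. intros [H1 [_ H3]] Hi. split; auto. rewrite <- H3. apply sumR_ge_term; auto. Qed.

Lemma in_simplex_delta m Q i0 : (i0 < m)%nat -> Q i0 = true -> in_simplex m Q (delta i0).
Proof.
  intros Hi HQ. unfold delta. split; [| split].
  - intros i _. destruct (Nat.eq_dec i i0); lra.
  - intros i _ HQi. destruct (Nat.eq_dec i i0); [subst; congruence | auto].
  - apply sumR_single; auto.
Qed.

Module Compactness.
Import all_boot ssralg ssrnum matrix Rstruct Rstruct_topology boolp classical_sets set_interval interval topology normedtype derive matrix_normedtype.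
Import numFieldNormedType.Exports.
Local Open Scope classical_set_scope.

Definition vnat (m : nat) (v : 'rV[R]_m) (i : nat) : R :=
  if insub i is Some o then v ord0 o else 0%R.

Arguments vnat {m}.

Lemma vnat_continuous m i : continuous (fun v : 'rV[R]_m => vnat v i).
Proof.
rewrite /vnat. case: (insub i) => [o|]; last exact: cst_continuous.
exact: coord_continuous.
Qed.

Lemma vnat_ord m (v : 'rV[R]_m) (i : 'I_m) : vnat v (nat_of_ord i) = v ord0 i.
Proof. by rewrite /vnat valK. Qed.

Lemma vnat_row m (f : nat -> R) i : (i < m)%N -> vnat (\row_(j < m) f (nat_of_ord j)) i = f i.
Proof. by move=> Hi; rewrite /vnat insubT mxE. Qed.

Lemma vnat_out m (v : 'rV[R]_m) i : ~ (i < m)%coq_nat -> vnat v i = 0%R.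
Proof. by move=> Hi; rewrite /vnat insubF //; apply/negbTE/negP => /ssrnat.ltP. Qed.

Lemma sumR_continuous m d (F : nat -> 'rV[R]_m -> R) : (forall i, continuous (F i)) ->
  continuous (fun v => sumR d (fun i => F i v)).
Proof.
move=> HF; elim: d => [|d IH] /=; first exact: cst_continuous.
by move=> x; apply: (@continuousD R R^o _ _ _ x (IH x) (HF d x)).
Qed.

Lemma prodR_continuous m d (F : nat -> 'rV[R]_m -> R) : (forall i, continuous (F i)) ->
  continuous (fun v => prodR d (fun i => F i v)).
Proof.
move=> HF; elim: d => [|d IH] /=; first exact: cst_continuous.
by move=> x; apply: (@continuousM R _ _ _ x (IH x) (HF d x)).
Qed.

Lemma scal_continuous m k (f : 'rV[R]_m -> R) : continuous f -> continuous (fun v => k * f v).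
Proof. by move=> Hf x; apply: (@continuousM R _ _ _ x (@cst_continuous _ _ k x) (Hf x)). Qed.

Lemma sub_continuous m (f g : 'rV[R]_m -> R) :
  continuous f -> continuous g -> continuous (fun v => f v - g v).
Proof. by move=> Hf Hg x; apply: (@continuousB R R^o _ _ _ x (Hf x) (Hg x)). Qed.

Lemma rpow_comp_continuous m l (f : 'rV[R]_m -> R) :
  Rle 0 l -> continuous f -> continuous (fun v => rpow (f v) l).
Proof.
move=> Hl Hf x; apply: (@continuous_comp _ _ _ f (fun s => rpow s l)); first exact: Hf.
by apply/continuity_pt_cvg; apply: rpow_continuity.
Qed.

Lemma hsig_continuous m c d lam : (forall j i, Rle 0 (lam j i)) ->
  continuous (fun v : 'rV[R]_m => hsig m c d lam (vnat v)).
Proof.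
move=> Hl; rewrite /hsig; apply: sub_continuous.
  by apply: sumR_continuous => i; apply: scal_continuous; apply: vnat_continuous.
apply: sumR_continuous => j; apply: scal_continuous; rewrite /geomean.
apply: prodR_continuous => i; apply: rpow_comp_continuous => //.
exact: vnat_continuous.
Qed.

Lemma closed_ge0 (m : nat) (g : 'rV[R]_m -> R) : continuous g -> closed [set v | Rle 0 (g v)].
Proof.
move=> Hg; have -> : [set v | Rle 0 (g v)] = g @^-1` [set x : R | (0 <= x)%R].
  by rewrite predeqE => v; split => /= /RleP.
by move: Hg => /continuous_closedP; apply; apply: closed_ge.
Qed.

Lemma closed_eq (m : nat) (g : 'rV[R]_m -> R) (k : R) : continuous g -> closed [set v | g v = k].
Proof.
move=> Hg; have -> : [set v | g v = k] = g @^-1` [set x : R | x = k] by [].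
by move: Hg => /continuous_closedP; apply; apply: closed_eq.
Qed.

Lemma in_simplex_compact m (Q : nat -> bool) :
  compact [set v : 'rV[R]_m | in_simplex m Q (vnat v)].
Proof.
set D := [set v : 'rV[R]_m | _].
have Deq : D = \bigcap_(i in [set: nat]) [set v | Rle 0 (vnat v i)] `&`
    \bigcap_(i in [set: nat]) (if Q i then setT else [set v | vnat v i = 0%R]) `&`
    [set v | sumR m (vnat v) = 1%R].
{ rewrite predeqE => v; split.
  - move=> [H1 [H2 H3]]; split; [split|] => //.
    + move=> i _ /=; case: (@ssrnat.ltP i m) => Hi; first exact: H1.
      by rewrite vnat_out //; apply: Rle_refl.
    + move=> i _ /=; case HQ: (Q i) => //=; case: (@ssrnat.ltP i m) => Hi; first exact: H2.
      by rewrite vnat_out.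
  - move=> [[H1 H2] H3]; split; [|split] => //.
    + by move=> i _; apply: (H1 i).
    + by move=> i _ HQ; have := H2 i I; rewrite HQ. }
have Dcl : closed D.
{ rewrite Deq; apply: closedI; [apply: closedI|].
  - by apply: closed_bigI => i _; apply: closed_ge0; apply: vnat_continuous.
  - apply: closed_bigI => i _; case: (Q i); first exact: closedT.
    by apply: closed_eq; apply: vnat_continuous.
  - by apply: closed_eq; apply: sumR_continuous => i; apply: vnat_continuous. }
have Sc : compact (`[0%R, 1%R]%classic : set R) by apply: segment_compact.
apply: (subclosed_compact Dcl (@rV_compact R m (fun _ => `[0%R, 1%R]%classic) (fun _ => Sc))).
move=> v Dv i /=; rewrite -vnat_ord.
have [H1 H2] := @in_simplex_le1 m Q (vnat v) i Dv (ssrnat.ltP (ltn_ord i)).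
by rewrite in_itv /=; apply/andP; split; apply/RleP.
Qed.

Lemma hsig_min_on_simplex m c d lam (Q : nat -> bool) i0 : (forall j i, Rle 0 (lam j i)) ->
  (i0 < m)%coq_nat -> Q i0 = true ->
  exists w, in_simplex m Q w /\ forall z, in_simplex m Q z -> Rle (hsig m c d lam w) (hsig m c d lam z).
Proof.
move=> Hl Hi0 HQ0.
set D := [set v : 'rV[R]_m | in_simplex m Q (vnat v)].
have Dne : D !=set0.
{ exists (\row_(j < m) delta i0 (nat_of_ord j))%R.
  apply: (@in_simplex_ext m Q (delta i0)); last exact: in_simplex_delta.
  by move=> i Hi; rewrite vnat_row //; apply/ssrnat.ltP. }
have [v Dv Hmin] := compact_EVT_min Dne (in_simplex_compact m Q)
  (continuous_subspaceT (@hsig_continuous m c d lam Hl)).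
move: Dv; rewrite inE => Dv.
exists (vnat v); split => // z Hz.
pose vz := (\row_(j < m) z (nat_of_ord j))%R : 'rV[R]_m.
have Hvz i : (i < m)%coq_nat -> vnat vz i = z i by move=> Hi; rewrite vnat_row //; apply/ssrnat.ltP.
rewrite (@hsig_ext m c d lam z (vnat vz)); last by move=> i Hi; rewrite Hvz.
apply/RleP; apply: Hmin; rewrite inE.
by apply: (@in_simplex_ext m Q z) => // i Hi; rewrite Hvz.
Qed.

End Compactness.

Lemma exp_tangent a x : exp a * (1 + x - a) <= exp x.
Proof.
  destruct (Req_dec x a) as [-> | Hne]; [replace (1 + a - a) with 1 by ring; lra |].
  assert (H := exp_ineq1 (x - a) ltac:(lra)).
  replace (exp x) with (exp a * exp (x - a)) by (rewrite <- exp_plus; f_equal; ring).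
  left. apply Rmult_lt_compat_l; [apply exp_pos | lra].
Qed.

Lemma ln_le_sub1 z : 0 < z -> ln z <= z - 1.
Proof. intros Hz. assert (H := exp_tangent 0 (ln z)). rewrite exp_0, exp_ln in H by auto. lra. Qed.

Lemma ln_increment_ge w t : 0 < w -> 0 < t -> t / (w + t) <= ln (w + t) - ln w.
Proof.
  intros Hw Ht. assert (H := ln_le_sub1 (w / (w + t)) ltac:(apply Rdiv_lt_0_compat; lra)).
  unfold Rdiv in H. rewrite ln_mult, ln_Rinv in H by (try apply Rinv_0_lt_compat; lra).
  replace (w * / (w + t) - 1) with (- (t / (w + t))) in H by (field; lra). lra.
Qed.

Lemma le_of_forall_gt0_le c w K : (forall t, 0 < t -> K <= c * (w + t)) -> K <= c * w.
Proof.
  intros H. destruct (Rle_dec K (c * w)) as [| Hn]; auto. exfalso.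
  assert (Hpos : 0 < 2 * Rabs c + 1) by (assert (0 <= Rabs c) by apply Rabs_pos; lra).
  set (t := (K - c * w) / (2 * Rabs c + 1)).
  assert (Ht : 0 < t) by (unfold t; apply Rdiv_lt_0_compat; lra).
  assert (H1 := H t Ht).
  assert (c * t <= Rabs c * t) by (apply Rmult_le_compat_r; [lra | apply Rle_abs]).
  assert (Rabs c * t < K - c * w).
  { unfold t. apply (Rmult_lt_reg_r (2 * Rabs c + 1)); auto. field_simplify; [| lra].
    assert (0 <= Rabs c) by apply Rabs_pos. nra. }
  lra.
Qed.

(* Test the bound at [t = r ^ (1 / (1 - al))] with [r = dd * exp B / (2 * C)]. *)
Lemma power_not_linearly_bounded dd B C al : 0 < dd -> 0 < al < 1 ->
  ~ (forall t, 0 < t -> dd * exp (al * ln t + B) <= t * C).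
Proof.
  intros Hd Ha H. assert (HeB := exp_pos B).
  destruct (Rle_dec C 0) as [HC | HC].
  { assert (H1 := H 1 ltac:(lra)). rewrite ln_1, Rmult_0_r, Rplus_0_l in H1.
    assert (0 < dd * exp B) by (apply Rmult_lt_0_compat; auto). nra. }
  set (r := dd * exp B / (2 * C)).
  assert (Hr : 0 < r) by (unfold r; apply Rdiv_lt_0_compat; [apply Rmult_lt_0_compat |]; lra).
  set (L := ln r / (1 - al)).
  assert (H1 := H (exp L) (exp_pos L)). rewrite ln_exp in H1.
  assert (E : exp L = exp (al * L) * r).
  { rewrite <- (exp_ln r), <- exp_plus by auto. f_equal. unfold L. field. lra. }
  rewrite E, exp_plus in H1.
  assert (Hea := exp_pos (al * L)).
  assert (r * C = dd * exp B / 2) by (unfold r; field; lra).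
  assert (0 < dd * exp B * exp (al * L)) by (repeat apply Rmult_lt_0_compat; auto).
  nra.
Qed.

Definition b2R (b : bool) : R := if b then 1 else 0.

Lemma b2R_bounds b : 0 <= b2R b <= 1.
Proof. destruct b; simpl; lra. Qed.

(** * Weighted geometric means *)

Section GeometricMean.
Variables (m : nat) (l : nat -> R).
Hypothesis l_ge0 : forall i, 0 <= l i.

Lemma geomean_exp z : (forall i, (i < m)%nat -> l i <> 0 -> 0 < z i) ->
  geomean m l z = exp (sumR m (fun i => l i * ln (z i))).
Proof.
  intros H. apply prodR_exp. intros i Hi. destruct (Req_EM_T (l i) 0) as [E | E].
  - rewrite E, Rmult_0_l, exp_0. apply rpow_0_r.
  - rewrite rpow_pos; auto.
Qed.

Lemma geomean_eq0 z i : (i < m)%nat -> l i <> 0 -> z i <= 0 -> geomean m l z = 0.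
Proof. intros Hi Hl Hz. apply (prodR_eq0 m _ i Hi), rpow_nonpos; auto. Qed.

Lemma geomean_ge0 z : 0 <= geomean m l z.
Proof. apply prodR_ge0. intros; apply rpow_ge0. Qed.

Lemma geomean_le z u : (forall i, (i < m)%nat -> 0 <= z i <= u i) -> geomean m l z <= geomean m l u.
Proof.
  intros H. apply prodR_le. intros i Hi. split; [apply rpow_ge0 | apply rpow_le; auto].
Qed.

Lemma geomean_cases z :
  (forall i, (i < m)%nat -> l i <> 0 -> 0 < z i) \/
  (exists i, (i < m)%nat /\ l i <> 0 /\ ~ 0 < z i).
Proof.
  destruct (classic (exists i, (i < m)%nat /\ l i <> 0 /\ ~ 0 < z i)) as [| Hn]; [right; auto | left].
  intros i Hi Hl. apply NNPP. intros Hz. apply Hn. exists i. auto.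
Qed.

Hypothesis l_sum1 : sumR m l = 1.

Lemma geomean_scal z al : 0 < al -> (forall i, (i < m)%nat -> 0 <= z i) ->
  geomean m l (fun i => al * z i) = al * geomean m l z.
Proof.
  intros Ha Hz. destruct (geomean_cases z) as [Hp | [i [Hi [Hl Hzi]]]].
  - assert (Hp2 : forall i, (i < m)%nat -> l i <> 0 -> 0 < al * z i).
    { intros i Hi Hl. apply Rmult_lt_0_compat; auto. }
    rewrite (geomean_exp z Hp), (geomean_exp _ Hp2).
    rewrite (sumR_ext m _ (fun i => ln al * l i + l i * ln (z i))).
    + rewrite sumR_add, sumR_scal_l, l_sum1, Rmult_1_r, exp_plus, exp_ln; auto.
    + intros i Hi. destruct (Req_EM_T (l i) 0) as [E | E]; [rewrite E; ring |].
      rewrite ln_mult; [ring | auto | apply Hp; auto].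
  - assert (z i = 0) by (assert (H := Hz i Hi); lra).
    rewrite (geomean_eq0 z i Hi Hl), (geomean_eq0 _ i Hi Hl); rewrite ?H; lra.
Qed.

(* Concavity of [log] in the direction [i1], in integrated form. *)
Lemma geomean_increment w i1 t : (i1 < m)%nat -> (forall i, (i < m)%nat -> 0 <= w i) ->
  0 < w i1 -> 0 < t ->
  t * (l i1 * geomean m l w / (w i1 + t)) <=
  geomean m l (fun i => w i + (if Nat.eq_dec i i1 then t else 0)) - geomean m l w.
Proof.
  intros Hi1 Hw Hw1 Ht.
  set (u := fun i => w i + (if Nat.eq_dec i i1 then t else 0)).
  assert (Hwu : forall i, (i < m)%nat -> 0 <= w i <= u i).
  { intros i Hi. unfold u. assert (H := Hw i Hi). destruct (Nat.eq_dec i i1); lra. }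
  assert (Hmono := geomean_le w u Hwu).
  destruct (geomean_cases w) as [Hp | [i [Hi [Hli Hwi]]]].
  - assert (Hpu : forall i, (i < m)%nat -> l i <> 0 -> 0 < u i).
    { intros i Hi Hli. assert (H := Hwu i Hi). assert (H' := Hp i Hi Hli). lra. }
    rewrite (geomean_exp w Hp), (geomean_exp u Hpu).
    rewrite (sumR_update m (fun i => l i * ln (w i)) (fun i => l i * ln (u i)) i1 Hi1).
    2:{ intros i Hi Hne. unfold u. destruct (Nat.eq_dec i i1); [congruence |]. rewrite Rplus_0_r. auto. }
    unfold u at 1. destruct (Nat.eq_dec i1 i1) as [_ |]; [| congruence].
    set (A := sumR m (fun i => l i * ln (w i))).
    set (Bv := l i1 * ln (w i1 + t) - l i1 * ln (w i1)).
    assert (HB : l i1 * (t / (w i1 + t)) <= Bv).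
    { unfold Bv. rewrite <- Rmult_minus_distr_l. apply Rmult_le_compat_l; auto. apply ln_increment_ge; auto. }
    rewrite exp_plus. assert (Hexp := exp_tangent 0 Bv). rewrite exp_0 in Hexp.
    assert (HA := exp_pos A).
    assert (exp A * (1 + Bv - 0) <= exp A * exp Bv) by (apply Rmult_le_compat_l; lra).
    replace (t * (l i1 * exp A / (w i1 + t))) with (exp A * (l i1 * (t / (w i1 + t)))) by (field; lra).
    assert (exp A * (l i1 * (t / (w i1 + t))) <= exp A * Bv) by (apply Rmult_le_compat_l; lra).
    lra.
  - rewrite (geomean_eq0 w i Hi Hli) in * by lra.
    replace (t * (l i1 * 0 / (w i1 + t))) with 0 by (field; lra). fold u. lra.
Qed.

(* Weighted AM-GM, via the tangent line of [exp] at [Y - A]. *)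
Lemma geomean_amgm dj w y : 0 <= dj -> (forall i, (i < m)%nat -> l i <> 0 -> 0 < w i) ->
  dj * exp (sumR m (fun i => l i * y i)) <=
  sumR m (fun i => (dj * l i * geomean m l w / w i) * exp (y i)).
Proof.
  intros Hd Hw. rewrite (geomean_exp w Hw).
  set (A := sumR m (fun i => l i * ln (w i))).
  set (Y := sumR m (fun i => l i * y i)).
  assert (E : sumR m (fun i => (dj * l i * exp A / w i) * exp (y i)) =
              dj * exp A * sumR m (fun i => l i * exp (y i - ln (w i)))).
  { rewrite <- sumR_scal_l. apply sumR_ext. intros i Hi. destruct (Req_EM_T (l i) 0) as [Z | Z].
    { rewrite Z. unfold Rdiv. ring. }
    assert (Hwi := Hw i Hi Z). unfold Rminus. rewrite exp_plus, exp_Ropp, exp_ln by auto. field. lra. }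
  rewrite E.
  assert (Hge : exp (Y - A) <= sumR m (fun i => l i * exp (y i - ln (w i)))).
  { assert (H : sumR m (fun i => l i * (exp (Y - A) * (1 + (y i - ln (w i)) - (Y - A)))) <=
                sumR m (fun i => l i * exp (y i - ln (w i)))).
    { apply sumR_le. intros i Hi. apply Rmult_le_compat_l; auto. apply exp_tangent. }
    rewrite (sumR_ext m _ (fun i => exp (Y - A) * (1 - (Y - A)) * l i + exp (Y - A) * (l i * y i)
                                    - exp (Y - A) * (l i * ln (w i)))) in H by (intros; ring).
    rewrite !sumR_sub, sumR_add, !sumR_scal_l, l_sum1 in H. fold Y A in H.
    replace (exp (Y - A) * (1 - (Y - A)) * 1 + exp (Y - A) * Y - exp (Y - A) * A)
      with (exp (Y - A)) in H by ring.
    auto. }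
  replace (exp Y) with (exp A * exp (Y - A)) by (rewrite <- exp_plus; f_equal; ring).
  assert (HA := exp_pos A). assert (0 <= dj * exp A) by (apply Rmult_le_pos; lra).
  rewrite <- Rmult_assoc. apply Rmult_le_compat_l; auto.
Qed.

End GeometricMean.

Definition is_zero (x : R) : bool := if Req_EM_T x 0 then true else false.

Lemma is_zeroP x : reflect (x = 0) (is_zero x).
Proof. unfold is_zero. destruct (Req_EM_T x 0); constructor; auto. Qed.

(** * Splitting the positive coefficients among the negative terms *)

Section ReducedSignomial.
Variables (m : nat) (c d : nat -> R) (lam : nat -> nat -> R).
Hypothesis lam_ge0 : forall j i, 0 <= lam j i.
Hypothesis lam_sum1 : forall j, (j < m)%nat -> sumR m (lam j) = 1.
Hypothesis d_ge0 : forall j, 0 <= d j.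

Local Notation h := (hsig m c d lam).

Lemma hsig_scal z al : 0 < al -> (forall i, (i < m)%nat -> 0 <= z i) ->
  h (fun i => al * z i) = al * h z.
Proof.
  intros Ha Hz. unfold hsig. rewrite Rmult_minus_distr_l, <- !sumR_scal_l. f_equal.
  - apply sumR_ext; intros; ring.
  - apply sumR_ext; intros j Hj. rewrite geomean_scal; auto. ring.
Qed.

Lemma hsig_sub z u :
  h u - h z = sumR m (fun i => c i * (u i - z i)) -
              sumR m (fun j => d j * (geomean m (lam j) u - geomean m (lam j) z)).
Proof.
  unfold hsig.
  rewrite (sumR_ext m (fun i => c i * (u i - z i)) (fun i => c i * u i - c i * z i)) by (intros; ring).
  rewrite (sumR_ext m (fun j => d j * (geomean m (lam j) u - geomean m (lam j) z))
             (fun j => d j * geomean m (lam j) u - d j * geomean m (lam j) z)) by (intros; ring).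
  rewrite !sumR_sub. ring.
Qed.

Lemma geomean_sub_ge0 j z u : (forall i, (i < m)%nat -> 0 <= z i <= u i) ->
  0 <= d j * (geomean m (lam j) u - geomean m (lam j) z).
Proof.
  intros H. apply Rmult_le_pos; auto.
  assert (geomean m (lam j) z <= geomean m (lam j) u) by (apply geomean_le; auto). lra.
Qed.

Lemma hsig_sub_le z u : (forall i, (i < m)%nat -> 0 <= z i <= u i) ->
  h u - h z <= sumR m (fun i => c i * (u i - z i)).
Proof.
  intros H. rewrite hsig_sub.
  assert (0 <= sumR m (fun j => d j * (geomean m (lam j) u - geomean m (lam j) z))); [| lra].
  apply sumR_ge0. intros j _. apply geomean_sub_ge0; auto.
Qed.

(* Raising the coordinates on [Q0] by [t] changes [h] by at most [t * sum_i |c_i|]. *)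
Lemma hsig_ge0_closure (Q0 : nat -> bool) :
  (forall z, (forall i, (i < m)%nat -> Q0 i = true -> 0 < z i) ->
             (forall i, (i < m)%nat -> Q0 i = false -> z i = 0) -> 0 <= h z) ->
  forall z, (forall i, (i < m)%nat -> 0 <= z i) ->
            (forall i, (i < m)%nat -> Q0 i = false -> z i = 0) -> 0 <= h z.
Proof.
  intros Hnn z Hz0 Hzq. destruct (Rle_dec 0 (h z)) as [| Hneg]; auto. exfalso.
  set (C := sumR m (fun i => Rabs (c i)) + 1).
  assert (HC : 0 < C).
  { assert (0 <= sumR m (fun i => Rabs (c i))) by (apply sumR_ge0; intros; apply Rabs_pos).
    unfold C. lra. }
  set (t := - h z / (2 * C)).
  assert (Ht : 0 < t) by (unfold t; apply Rdiv_lt_0_compat; lra).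
  set (u := fun i => z i + t * b2R (Q0 i)).
  assert (Hzu : forall i, (i < m)%nat -> 0 <= z i <= u i).
  { intros i Hi. unfold u. assert (H := b2R_bounds (Q0 i)). split; auto. nra. }
  assert (Hu : 0 <= h u).
  { apply Hnn; intros i Hi HQ; unfold u, b2R; rewrite HQ.
    - assert (H := Hz0 i Hi); lra.
    - rewrite Hzq; auto; ring. }
  assert (Hle : sumR m (fun i => c i * (u i - z i)) <= t * C).
  { unfold C. rewrite Rmult_plus_distr_l, <- sumR_scal_l.
    assert (sumR m (fun i => c i * (u i - z i)) <= sumR m (fun i => t * Rabs (c i))); [| lra].
    apply sumR_le. intros i Hi. unfold u. replace (z i + t * b2R (Q0 i) - z i) with (t * b2R (Q0 i)) by ring.
    assert (H' := Rle_abs (c i)). assert (0 <= Rabs (c i)) by apply Rabs_pos.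
    destruct (Q0 i); simpl; nra. }
  assert (H := hsig_sub_le z u Hzu).
  assert (t * C = - h z / 2) by (unfold t; field; lra). lra.
Qed.

(* [ell j] is the share of the coefficients [c] on [Q] set aside to dominate the
   negative term [d j * exp (lam j . y)]. *)
Record age_cert (Q : nat -> bool) (ell : nat -> nat -> R) : Prop := {
  cert_ge0 : forall j i, 0 <= ell j i;
  cert_support : forall j i, Q i = false -> ell j i = 0;
  cert_budget : forall i, (i < m)%nat -> Q i = true -> sumR m (fun j => ell j i) <= c i;
  cert_dominates : forall j, (j < m)%nat -> (forall i, (i < m)%nat -> lam j i <> 0 -> Q i = true) ->
    forall y, d j * exp (sumR m (fun i => lam j i * y i)) <= sumR m (fun i => ell j i * exp (y i))
}.

Lemma age_cert_empty Q : (forall i, (i < m)%nat -> Q i = false) -> age_cert Q (fun _ _ => 0).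
Proof.
  intros HQ. split.
  - intros; lra.
  - auto.
  - intros i Hi HQi. rewrite HQ in HQi; [discriminate | auto].
  - intros j Hj Hsupp. exfalso. assert (Hs := lam_sum1 j Hj). rewrite sumR_eq0 in Hs; [lra |].
    intros i Hi. destruct (Req_EM_T (lam j i) 0) as [| Hne]; auto.
    assert (H := Hsupp i Hi Hne). rewrite HQ in H; auto. discriminate.
Qed.

Section Minimizer.
Variables (Q : nat -> bool) (w : nat -> R).
Hypothesis w_in : in_simplex m Q w.
Hypothesis w_min : forall z, in_simplex m Q z -> h w <= h z.
Hypothesis hw_ge0 : 0 <= h w.

Lemma w_ge0 i : (i < m)%nat -> 0 <= w i.
Proof. apply w_in. Qed.

Lemma w_off i : (i < m)%nat -> Q i = false -> w i = 0.
Proof. apply w_in. Qed.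

(* By homogeneity, [h u = s * h (u / s) >= s * h w >= h w] when [s = sum u >= 1]. *)
Lemma hsig_min_le u : (forall i, (i < m)%nat -> 0 <= u i) ->
  (forall i, (i < m)%nat -> Q i = false -> u i = 0) -> 1 <= sumR m u -> h w <= h u.
Proof.
  intros Hu0 HuQ Hsum. set (s := sumR m u) in *.
  assert (Hs0 : 0 < s) by lra.
  set (v := fun i => / s * u i).
  assert (Hv0 : forall i, (i < m)%nat -> 0 <= v i).
  { intros i Hi. unfold v. apply Rmult_le_pos; [left; apply Rinv_0_lt_compat |]; auto. }
  assert (Hv : in_simplex m Q v).
  { split; [| split]; auto.
    - intros i Hi HQ. unfold v. rewrite HuQ; auto; ring.
    - unfold v. rewrite sumR_scal_l. fold s. field. lra. }
  assert (E : h u = s * h v).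
  { rewrite <- hsig_scal by auto. apply hsig_ext. intros i Hi. unfold v. field. lra. }
  assert (H := w_min v Hv). rewrite E.
  assert (0 <= (s - 1) * h v) by (apply Rmult_le_pos; lra).
  replace (s * h v) with (h v + (s - 1) * h v) by ring. lra.
Qed.

Lemma hsig_min_first_order i1 : (i1 < m)%nat -> Q i1 = true -> 0 < w i1 ->
  sumR m (fun j => d j * lam j i1 * geomean m (lam j) w / w i1) <= c i1.
Proof.
  intros Hi1 HQ1 Hw1.
  set (K := sumR m (fun j => d j * (lam j i1 * geomean m (lam j) w))).
  assert (Hlim : forall t, 0 < t -> K <= c i1 * (w i1 + t)).
  { intros t Ht. set (u := fun i => w i + (if Nat.eq_dec i i1 then t else 0)).
    assert (Hwu : forall i, (i < m)%nat -> 0 <= w i <= u i).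
    { intros i Hi. unfold u. assert (H := w_ge0 i Hi). destruct (Nat.eq_dec i i1); lra. }
    assert (Hge : h w <= h u).
    { apply hsig_min_le.
      - intros i Hi. assert (H := Hwu i Hi). lra.
      - intros i Hi HQ. unfold u. destruct (Nat.eq_dec i i1) as [-> |]; [congruence |].
        rewrite w_off; auto; ring.
      - rewrite (sumR_update m w u i1 Hi1).
        + unfold u. destruct (Nat.eq_dec i1 i1); [| congruence]. destruct w_in as [_ [_ ->]]. lra.
        + intros i Hi Hne. unfold u. destruct (Nat.eq_dec i i1); [congruence | ring]. }
    assert (Hc : sumR m (fun i => c i * (u i - w i)) = c i1 * t).
    { rewrite <- (sumR_single m i1 (c i1 * t) Hi1). apply sumR_ext. intros i Hi. unfold u.
      destruct (Nat.eq_dec i i1) as [-> |]; ring. }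
    assert (HG : sumR m (fun j => d j * (t * (lam j i1 * geomean m (lam j) w / (w i1 + t)))) <=
                 sumR m (fun j => d j * (geomean m (lam j) u - geomean m (lam j) w))).
    { apply sumR_le. intros j Hj. apply Rmult_le_compat_l; auto.
      apply geomean_increment; auto. apply w_ge0. }
    rewrite (sumR_ext m _ (fun j => (t / (w i1 + t)) * (d j * (lam j i1 * geomean m (lam j) w)))) in HG
      by (intros; field; lra).
    rewrite sumR_scal_l in HG. fold K in HG.
    assert (Hd2 := hsig_sub w u).
    apply (Rmult_le_reg_l (t / (w i1 + t))); [apply Rdiv_lt_0_compat; lra |].
    replace (t / (w i1 + t) * (c i1 * (w i1 + t))) with (c i1 * t) by (field; lra). lra. }
  assert (HK := le_of_forall_gt0_le _ _ _ Hlim).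
  rewrite (sumR_ext m _ (fun j => / w i1 * (d j * (lam j i1 * geomean m (lam j) w)))) by (intros; field; lra).
  rewrite sumR_scal_l. fold K. apply (Rmult_le_reg_l (w i1)); auto.
  replace (w i1 * (/ w i1 * K)) with K by (field; lra). lra.
Qed.

Definition vanish (i : nat) : bool := Q i && is_zero (w i).

Definition push (t : R) (i : nat) : R := w i + t * b2R (vanish i).

Lemma push_ge t i : 0 < t -> (i < m)%nat -> 0 <= w i <= push t i.
Proof.
  intros Ht Hi. unfold push. assert (H := w_ge0 i Hi). assert (H' := b2R_bounds (vanish i)). nra.
Qed.

Lemma hsig_min_le_push t : 0 < t -> h w <= h (push t).
Proof.
  intros Ht. apply hsig_min_le.
  - intros i Hi. assert (H := push_ge t i Ht Hi). lra.
  - intros i Hi HQ. unfold push, vanish. rewrite HQ, w_off; auto. simpl. ring.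
  - unfold push. rewrite sumR_add, sumR_scal_l. destruct w_in as [_ [_ ->]].
    assert (0 <= sumR m (fun i => b2R (vanish i))) by (apply sumR_ge0; intros; apply b2R_bounds).
    assert (0 <= t * sumR m (fun i => b2R (vanish i))) by (apply Rmult_le_pos; lra). lra.
Qed.

Section PushedTerm.
Variable j : nat.
Hypothesis j_supp : forall i, (i < m)%nat -> lam j i <> 0 -> Q i = true.

Definition vanish_weight : R := sumR m (fun i => lam j i * b2R (vanish i)).

Lemma vanish_weight_bounds i1 i2 : (j < m)%nat ->
  (i1 < m)%nat -> lam j i1 <> 0 -> 0 < w i1 -> (i2 < m)%nat -> lam j i2 <> 0 -> w i2 = 0 ->
  0 < vanish_weight < 1.
Proof.
  intros Hj Hi1 Hl1 Hw1 Hi2 Hl2 Hw2.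
  assert (HS2 : vanish i2 = true).
  { unfold vanish. rewrite j_supp by auto. destruct (is_zeroP (w i2)); [auto | lra]. }
  assert (HS1 : vanish i1 = false).
  { unfold vanish. destruct (is_zeroP (w i1)); [lra | apply andb_false_r]. }
  assert (Hind := fun i => b2R_bounds (vanish i)).
  assert (E : vanish_weight + sumR m (fun i => lam j i * (1 - b2R (vanish i))) = 1).
  { unfold vanish_weight. rewrite <- sumR_add. transitivity (sumR m (lam j)); [| auto].
    apply sumR_ext; intros; ring. }
  assert (Hpos : 0 < vanish_weight).
  { apply (sumR_gt0 m _ i2); auto.
    - intros i Hi. apply Rmult_le_pos; [apply lam_ge0 | apply Hind].
    - rewrite HS2. simpl. rewrite Rmult_1_r. assert (H := lam_ge0 j i2). lra. }
  assert (Hrest : 0 < sumR m (fun i => lam j i * (1 - b2R (vanish i)))).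
  { apply (sumR_gt0 m _ i1); auto.
    - intros i Hi. apply Rmult_le_pos; [apply lam_ge0 | assert (H := Hind i); lra].
    - rewrite HS1. simpl. rewrite Rminus_0_r, Rmult_1_r. assert (H := lam_ge0 j i1). lra. }
  lra.
Qed.

Lemma geomean_push t : 0 < t ->
  geomean m (lam j) (push t) =
  exp (vanish_weight * ln t + sumR m (fun i => lam j i * (1 - b2R (vanish i)) * ln (w i))).
Proof.
  intros Ht.
  assert (Hpos : forall i, (i < m)%nat -> lam j i <> 0 -> 0 < push t i).
  { intros i Hi Hli. unfold push, vanish. rewrite (j_supp i Hi Hli). simpl.
    destruct (is_zeroP (w i)) as [E | E]; simpl; [rewrite E; lra |].
    assert (H := w_ge0 i Hi). lra. }
  rewrite (geomean_exp m (lam j) _ Hpos). f_equal. unfold vanish_weight.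
  rewrite <- sumR_scal_r, <- sumR_add. apply sumR_ext. intros i Hi.
  destruct (Req_EM_T (lam j i) 0) as [E | E]; [rewrite E; ring |].
  unfold push, vanish. rewrite (j_supp i Hi E). simpl.
  destruct (is_zeroP (w i)) as [E2 | E2]; simpl.
  - rewrite E2, Rplus_0_l, Rmult_1_r. ring.
  - rewrite Rmult_0_r, Rplus_0_r. ring.
Qed.

End PushedTerm.

(* If the support of [lam j] met both signs of [w], pushing mass [t] onto the vanishing
   coordinates would let [d j * geomean] grow like [t ^ al] with [0 < al < 1], while the
   linear part grows like [t]: this contradicts minimality for small [t]. *)
Lemma hsig_min_support_pos j i1 : (j < m)%nat -> 0 < d j ->
  (forall i, (i < m)%nat -> lam j i <> 0 -> Q i = true) ->
  (i1 < m)%nat -> lam j i1 <> 0 -> 0 < w i1 ->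
  forall i2, (i2 < m)%nat -> lam j i2 <> 0 -> 0 < w i2.
Proof.
  intros Hj Hdj Hsupp Hi1 Hl1 Hw1 i2 Hi2 Hl2.
  destruct (Rlt_le_dec 0 (w i2)) as [| Hw2]; auto. exfalso.
  assert (Hw2' : w i2 = 0) by (assert (H := w_ge0 i2 Hi2); lra).
  apply (power_not_linearly_bounded (d j) (sumR m (fun i => lam j i * (1 - b2R (vanish i)) * ln (w i)))
           (sumR m (fun i => c i * b2R (vanish i))) (vanish_weight j) Hdj
           (vanish_weight_bounds j Hsupp i1 i2 Hj Hi1 Hl1 Hw1 Hi2 Hl2 Hw2')).
  intros t Ht. rewrite <- geomean_push by auto.
  assert (Hge := hsig_min_le_push t Ht).
  assert (Hd2 := hsig_sub w (push t)).
  assert (Hc : sumR m (fun i => c i * (push t i - w i)) = t * sumR m (fun i => c i * b2R (vanish i))).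
  { rewrite <- sumR_scal_l. apply sumR_ext. intros i Hi. unfold push. ring. }
  assert (Hterm : d j * (geomean m (lam j) (push t) - geomean m (lam j) w) <=
                  sumR m (fun k => d k * (geomean m (lam k) (push t) - geomean m (lam k) w))).
  { apply (sumR_ge_term m (fun k => d k * (geomean m (lam k) (push t) - geomean m (lam k) w)) j); auto.
    intros k Hk. apply geomean_sub_ge0. intros i Hi. apply push_ge; auto. }
  rewrite (geomean_eq0 m (lam j) w i2 Hi2 Hl2) in Hterm by lra.
  lra.
Qed.

Lemma ntrue_vanish_lt : (ntrue m vanish < ntrue m Q)%nat.
Proof.
  destruct w_in as [_ [_ Hsum]].
  apply ntrue_lt; [intros i _ H; apply andb_true_iff in H; tauto |].
  destruct (classic (exists i, (i < m)%nat /\ w i <> 0)) as [[i [Hi Hne]] | Hn].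
  - exists i. assert (HQi : Q i = true).
    { destruct (Q i) eqn:E; auto. exfalso. apply Hne, w_off; auto. }
    repeat split; auto. unfold vanish. rewrite HQi. destruct (is_zeroP (w i)); tauto.
  - exfalso. rewrite sumR_eq0 in Hsum; [lra |].
    intros i Hi. apply NNPP. intros Hne. apply Hn. exists i; auto.
Qed.

Definition tangent_cert (j i : nat) : R :=
  if Q i && negb (is_zero (w i)) && Nat.ltb i m
  then d j * lam j i * geomean m (lam j) w / w i else 0.

Lemma tangent_cert_eq j i : (i < m)%nat -> Q i = true -> 0 < w i ->
  tangent_cert j i = d j * lam j i * geomean m (lam j) w / w i.
Proof.
  intros Hi HQ Hw. unfold tangent_cert. rewrite HQ.
  destruct (is_zeroP (w i)); [lra |]. apply Nat.ltb_lt in Hi. rewrite Hi. reflexivity.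
Qed.

Lemma tangent_cert_eq0 j i : Q i && negb (is_zero (w i)) = false -> tangent_cert j i = 0.
Proof. intros H. unfold tangent_cert. rewrite H. reflexivity. Qed.

Lemma tangent_cert_ge0 j i : 0 <= tangent_cert j i.
Proof.
  unfold tangent_cert. destruct (Q i && negb (is_zero (w i)) && Nat.ltb i m) eqn:E; [| lra].
  apply andb_true_iff in E as [E Hi]. apply andb_true_iff in E as [_ Hz].
  apply Nat.ltb_lt in Hi. destruct (is_zeroP (w i)); [discriminate |].
  assert (Hw : 0 < w i) by (assert (H := w_ge0 i Hi); lra).
  unfold Rdiv. apply Rmult_le_pos; [| left; apply Rinv_0_lt_compat; auto].
  apply Rmult_le_pos; [apply Rmult_le_pos; auto | apply geomean_ge0].
Qed.

Lemma tangent_cert_dominates j i1 : (j < m)%nat ->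
  (forall i, (i < m)%nat -> lam j i <> 0 -> Q i = true) ->
  (i1 < m)%nat -> lam j i1 <> 0 -> 0 < w i1 ->
  forall y, d j * exp (sumR m (fun i => lam j i * y i)) <= sumR m (fun i => tangent_cert j i * exp (y i)).
Proof.
  intros Hj Hsupp Hi1 Hl1 Hw1 y.
  assert (Hrhs : 0 <= sumR m (fun i => tangent_cert j i * exp (y i))).
  { apply sumR_ge0. intros i _. apply Rmult_le_pos; [apply tangent_cert_ge0 | left; apply exp_pos]. }
  destruct (Req_dec (d j) 0) as [Hd0 | Hd0]; [rewrite Hd0, Rmult_0_l; auto |].
  assert (Hpos := hsig_min_support_pos j i1 Hj ltac:(assert (H := d_ge0 j); lra) Hsupp Hi1 Hl1 Hw1).
  eapply Rle_trans; [apply (geomean_amgm m (lam j)); auto |].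
  apply sumR_le. intros i Hi. apply Rmult_le_compat_r; [left; apply exp_pos |].
  destruct (Req_EM_T (lam j i) 0) as [Z | Z].
  - rewrite Z. unfold Rdiv. rewrite Rmult_0_r, !Rmult_0_l. apply tangent_cert_ge0.
  - rewrite tangent_cert_eq; auto. lra.
Qed.

(* The minimizer certifies the coordinates where it is positive; the vanishing ones are
   handled by a certificate for the smaller support. *)
Lemma age_cert_step ellS : age_cert vanish ellS ->
  age_cert Q (fun j i => ellS j i + tangent_cert j i).
Proof.
  intros [HS_ge0 HS_supp HS_budget HS_dom].
  assert (Hzero : forall i, (i < m)%nat -> Q i = true -> vanish i = false -> 0 < w i).
  { intros i Hi HQ HV. unfold vanish in HV. rewrite HQ in HV. simpl in HV.
    destruct (is_zeroP (w i)); [discriminate |]. assert (H := w_ge0 i Hi). lra. }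
  split.
  - intros j i. assert (H1 := HS_ge0 j i). assert (H2 := tangent_cert_ge0 j i). lra.
  - intros j i HQ. rewrite HS_supp, tangent_cert_eq0; [ring | rewrite HQ; auto |].
    unfold vanish. rewrite HQ. auto.
  - intros i Hi HQ. rewrite sumR_add. destruct (vanish i) eqn:HV.
    + rewrite (sumR_eq0 m (fun j => tangent_cert j i)).
      * assert (H := HS_budget i Hi HV). lra.
      * intros j _. apply tangent_cert_eq0. unfold vanish in HV.
        apply andb_true_iff in HV as [_ HV]. rewrite HV. apply andb_false_r.
    + rewrite (sumR_eq0 m (fun j => ellS j i)) by (intros; apply HS_supp; auto).
      rewrite (sumR_ext m _ (fun j => d j * lam j i * geomean m (lam j) w / w i))
        by (intros; apply tangent_cert_eq; auto).
      rewrite Rplus_0_l. apply hsig_min_first_order; auto.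
  - intros j Hj Hsupp y.
    rewrite (sumR_ext m (fun i => (ellS j i + tangent_cert j i) * exp (y i))
               (fun i => ellS j i * exp (y i) + tangent_cert j i * exp (y i))), sumR_add
      by (intros; ring).
    assert (HS0 : 0 <= sumR m (fun i => ellS j i * exp (y i))).
    { apply sumR_ge0. intros i _. apply Rmult_le_pos; [apply HS_ge0 | left; apply exp_pos]. }
    assert (HT0 : 0 <= sumR m (fun i => tangent_cert j i * exp (y i))).
    { apply sumR_ge0. intros i _. apply Rmult_le_pos; [apply tangent_cert_ge0 | left; apply exp_pos]. }
    destruct (classic (forall i, (i < m)%nat -> lam j i <> 0 -> vanish i = true)) as [HinS | HnS].
    + assert (H := HS_dom j Hj HinS y). lra.
    + apply not_all_ex_not in HnS as [i1 Hi1].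
      apply imply_to_and in Hi1 as [Hi1m Hi1]. apply imply_to_and in Hi1 as [Hl1 HV1].
      apply not_true_is_false in HV1.
      assert (H := tangent_cert_dominates j i1 Hj Hsupp Hi1m Hl1 (Hzero i1 Hi1m (Hsupp i1 Hi1m Hl1) HV1) y).
      lra.
Qed.

End Minimizer.

(* Induction on the size of the support [Q], minimizing [h] on the simplex over [Q]. *)
Theorem age_cert_exists (Q0 : nat -> bool) :
  (forall z, (forall i, (i < m)%nat -> Q0 i = true -> 0 < z i) ->
             (forall i, (i < m)%nat -> Q0 i = false -> z i = 0) -> 0 <= h z) ->
  exists ell, age_cert Q0 ell.
Proof.
  intros Hnn. assert (Hclos := hsig_ge0_closure Q0 Hnn).
  enough (Main : forall N Q, (ntrue m Q <= N)%nat -> (forall i, (i < m)%nat -> Q i = true -> Q0 i = true) ->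
            exists ell, age_cert Q ell) by (apply (Main (ntrue m Q0)); auto).
  induction N as [| N IHN]; intros Q HN HQQ0;
    (destruct (classic (exists i0, (i0 < m)%nat /\ Q i0 = true)) as [[i0 [Hi0 HQi0]] | Hno];
     [| exists (fun _ _ => 0); apply age_cert_empty; intros i Hi;
        apply not_true_is_false; intros HQ; apply Hno; exists i; auto]).
  - assert (H := ntrue_pos m Q i0 Hi0 HQi0). lia.
  - destruct (Compactness.hsig_min_on_simplex m c d lam Q i0 lam_ge0 Hi0 HQi0) as [w [Hw Hmin]].
    assert (Hw0 : 0 <= h w).
    { destruct Hw as [Hw0 [HwQ _]]. apply Hclos; auto.
      intros i Hi HQ0. apply HwQ; auto. apply not_true_is_false. intros HQ.
      rewrite (HQQ0 i Hi HQ) in HQ0. discriminate. }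
    destruct (IHN (vanish Q w)) as [ellS HellS].
    + assert (H := ntrue_vanish_lt Q w Hw). lia.
    + intros i Hi HV. apply HQQ0; auto. unfold vanish in HV. apply andb_true_iff in HV. tauto.
    + eexists. apply (age_cert_step Q w Hw Hmin Hw0 ellS HellS).
Qed.

End ReducedSignomial.

(** * Every column is a convex combination of the extremal ones *)

Definition in_hull (n m : nat) (a : nat -> nat -> R) (U : nat -> bool) (p : nat -> R) : Prop :=
  exists th : nat -> R, (forall k, 0 <= th k) /\ (forall k, (k < m)%nat -> U k = false -> th k = 0) /\
    sumR m th = 1 /\ vec_eq n p (fun r => sumR m (fun k => th k * a k r)).

Section Hull.
Variables (n m : nat) (a : nat -> nat -> R).

Lemma in_hull_col U k : (k < m)%nat -> U k = true -> in_hull n m a U (a k).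
Proof.
  intros Hk HU. exists (delta k). split; [| split; [| split]].
  - intros i. unfold delta. destruct (Nat.eq_dec i k); lra.
  - intros i Hi HUi. unfold delta. destruct (Nat.eq_dec i k) as [-> |]; [congruence | auto].
  - apply sumR_single; auto.
  - intros r Hr. rewrite sumR_delta; auto.
Qed.

Lemma in_hull_mono U U' p : (forall k, (k < m)%nat -> U k = true -> U' k = true) ->
  in_hull n m a U p -> in_hull n m a U' p.
Proof.
  intros H [th [H1 [H2 [H3 H4]]]]. exists th. repeat split; auto.
  intros k Hk HU'. apply H2; auto. destruct (U k) eqn:E; auto. rewrite (H k Hk E) in HU'. discriminate.
Qed.

Lemma New_in_hull p : New n m a p -> in_hull n m a (fun _ => true) p.
Proof.
  intros [lam [H1 [H2 H3]]]. exists (fun k => if Nat.ltb k m then lam k else 0).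
  split; [| split; [| split]].
  - intros k. destruct (Nat.ltb k m) eqn:E; [apply Nat.ltb_lt in E; auto | lra].
  - intros k Hk HU. discriminate.
  - rewrite <- H2. apply sumR_ext. intros i Hi. apply Nat.ltb_lt in Hi. rewrite Hi. auto.
  - intros r Hr. rewrite H3 by auto. apply sumR_ext. intros i Hi. apply Nat.ltb_lt in Hi. rewrite Hi. auto.
Qed.

Lemma in_hull_New U p : in_hull n m a U p -> New n m a p.
Proof. intros [th [H1 [_ [H3 H4]]]]. exists th. auto. Qed.

Lemma in_hull_trans U U' p : in_hull n m a U p ->
  (forall k, (k < m)%nat -> U k = true -> in_hull n m a U' (a k)) -> in_hull n m a U' p.
Proof.
  intros [th [H1 [H2 [H3 H4]]]] Hk.
  assert (Hch : forall k, exists kap : nat -> R, (k < m)%nat -> U k = true ->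
     (forall q, 0 <= kap q) /\ (forall q, (q < m)%nat -> U' q = false -> kap q = 0) /\
     sumR m kap = 1 /\ vec_eq n (a k) (fun r => sumR m (fun q => kap q * a q r))).
  { intros k. destruct (classic ((k < m)%nat /\ U k = true)) as [[Hkm HU] | Hn].
    - destruct (Hk k Hkm HU) as [kap Hkap]. exists kap. auto.
    - exists (fun _ => 0). intros Hkm HU. exfalso; auto. }
  destruct (choice _ Hch) as [K HK].
  assert (Hoff : forall k, (k < m)%nat -> U k = false -> th k = 0) by auto.
  exists (fun q => sumR m (fun k => th k * K k q)). split; [| split; [| split]].
  - intros q. apply sumR_ge0. intros k Hkm. destruct (U k) eqn:E.
    + apply Rmult_le_pos; auto. apply (HK k Hkm E).
    + rewrite Hoff; auto. lra.
  - intros q Hq HU'. apply sumR_eq0. intros k Hkm. destruct (U k) eqn:E.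
    + destruct (HK k Hkm E) as [_ [HK2 _]]. rewrite HK2; auto. ring.
    + rewrite Hoff; auto. ring.
  - rewrite sumR_swap, <- H3. apply sumR_ext. intros k Hkm. rewrite sumR_scal_l. destruct (U k) eqn:E.
    + destruct (HK k Hkm E) as [_ [_ [-> _]]]. ring.
    + rewrite Hoff; auto. ring.
  - intros r Hr. rewrite H4 by auto.
    rewrite (sumR_ext m (fun q => sumR m (fun k => th k * K k q) * a q r)
                        (fun q => sumR m (fun k => th k * (K k q * a q r)))).
    2:{ intros q Hq. rewrite <- sumR_scal_r. apply sumR_ext. intros; ring. }
    rewrite <- sumR_swap. apply sumR_ext. intros k Hkm. rewrite sumR_scal_l. destruct (U k) eqn:E.
    + destruct (HK k Hkm E) as [_ [_ [_ HK4]]]. rewrite (HK4 r Hr). auto.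
    + rewrite Hoff; auto. ring.
Qed.

Definition remove (U : nat -> bool) (v : nat) : nat -> bool := fun k => U k && negb (Nat.eqb k v).

Lemma ntrue_remove_lt U v : (v < m)%nat -> U v = true -> (ntrue m (remove U v) < ntrue m U)%nat.
Proof.
  intros Hv HUv. apply ntrue_lt.
  - intros i _ H. unfold remove in H. apply andb_true_iff in H. tauto.
  - exists v. repeat split; auto. unfold remove. rewrite Nat.eqb_refl. apply andb_false_r.
Qed.

(* Divide out the weight [th v < 1] that [a v] puts on itself. *)
Lemma in_hull_remove U v th : (v < m)%nat -> (forall k, 0 <= th k) ->
  (forall k, (k < m)%nat -> U k = false -> th k = 0) -> sumR m th = 1 ->
  vec_eq n (a v) (fun r => sumR m (fun k => th k * a k r)) -> th v < 1 ->
  in_hull n m a (remove U v) (a v).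
Proof.
  intros Hv H0 H1 H2 H3 Hlt.
  exists (fun k => if Nat.eq_dec k v then 0 else th k / (1 - th v)). split; [| split; [| split]].
  - intros k. destruct (Nat.eq_dec k v); [lra |]. unfold Rdiv.
    apply Rmult_le_pos; auto. left; apply Rinv_0_lt_compat; lra.
  - intros k Hk HU. destruct (Nat.eq_dec k v); auto. unfold remove in HU.
    apply andb_false_iff in HU as [HU | HU].
    + rewrite H1; auto. unfold Rdiv; ring.
    + apply negb_false_iff, Nat.eqb_eq in HU. congruence.
  - rewrite (sumR_ext m _ (fun k => / (1 - th v) * (if Nat.eq_dec k v then 0 else th k))).
    2:{ intros k Hk. destruct (Nat.eq_dec k v); unfold Rdiv; ring. }
    rewrite sumR_scal_l. rewrite (sumR_update m th (fun k => if Nat.eq_dec k v then 0 else th k) v Hv).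
    2:{ intros i Hi Hiv. destruct (Nat.eq_dec i v); [congruence | auto]. }
    destruct (Nat.eq_dec v v); [| congruence]. rewrite H2. field. lra.
  - intros r Hr.
    rewrite (sumR_ext m _ (fun k => / (1 - th v) * (if Nat.eq_dec k v then 0 else th k * a k r))).
    2:{ intros k Hk. destruct (Nat.eq_dec k v); unfold Rdiv; ring. }
    rewrite sumR_scal_l.
    rewrite (sumR_update m (fun k => th k * a k r) (fun k => if Nat.eq_dec k v then 0 else th k * a k r) v Hv).
    2:{ intros i Hi Hiv. destruct (Nat.eq_dec i v); [congruence | auto]. }
    destruct (Nat.eq_dec v v); [| congruence]. rewrite <- (H3 r Hr). field. lra.
Qed.

Lemma unit_weights_col mu v : (v < m)%nat -> (forall k, 0 <= mu k) -> sumR m mu = 1 -> mu v = 1 ->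
  vec_eq n (fun r => sumR m (fun k => mu k * a k r)) (a v).
Proof.
  intros Hv H0 Hs H1 r Hr. rewrite <- (sumR_delta m v (fun k => a k r) Hv).
  apply sumR_ext. intros k Hk. unfold delta. destruct (Nat.eq_dec k v) as [-> | Hkv]; [rewrite H1; ring |].
  rewrite (sumR_unit_single m mu v k); auto.
Qed.

(* Write [a v = t y + (1 - t) z] with [y], [z] in the hull; if the combined weight of [v]
   were [1], both [y] and [z] would equal [a v]. *)
Lemma nonextremal_in_hull_remove U v : (v < m)%nat -> U v = true -> ~ extremal n m a v ->
  (forall k, (k < m)%nat -> in_hull n m a U (a k)) -> in_hull n m a (remove U v) (a v).
Proof.
  intros Hv HUv Hne Hall.
  assert (HNew : New n m a (a v)) by (apply (in_hull_New (fun _ => true)), in_hull_col; auto).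
  assert (Hex : exists y z t, New n m a y /\ New n m a z /\ 0 < t < 1 /\
     vec_eq n (a v) (fun k => t * y k + (1 - t) * z k) /\ ~ (vec_eq n y (a v) /\ vec_eq n z (a v))).
  { apply NNPP. intros Hn. apply Hne. split; auto. intros y z t Hy Hz Ht Heq.
    apply NNPP. intros Hc. apply Hn. exists y, z, t. auto. }
  destruct Hex as [y [z [t [Hy [Hz [Ht [Heq Hnot]]]]]]].
  assert (HU : forall p, New n m a p -> in_hull n m a U p).
  { intros p Hp. apply (in_hull_trans (fun _ => true)); [apply New_in_hull; auto | intros; apply Hall; auto]. }
  destruct (HU y Hy) as [mu [Hm1 [Hm2 [Hm3 Hm4]]]]. destruct (HU z Hz) as [nu [Hn1 [Hn2 [Hn3 Hn4]]]].
  set (th := fun k => t * mu k + (1 - t) * nu k).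
  destruct (Rlt_le_dec (th v) 1) as [Hlt | Hge].
  - apply (in_hull_remove U v th); auto.
    + intros k. unfold th. assert (H1 := Hm1 k). assert (H2 := Hn1 k). nra.
    + intros k Hk HUk. unfold th. rewrite Hm2, Hn2; auto. ring.
    + unfold th. rewrite sumR_add, !sumR_scal_l, Hm3, Hn3. ring.
    + intros r Hr. rewrite (Heq r Hr), (Hm4 r Hr), (Hn4 r Hr). unfold th.
      rewrite <- !sumR_scal_l, <- sumR_add. apply sumR_ext. intros; ring.
  - exfalso. apply Hnot.
    assert (Hmv : mu v <= 1) by (rewrite <- Hm3; apply sumR_ge_term; auto).
    assert (Hnv : nu v <= 1) by (rewrite <- Hn3; apply sumR_ge_term; auto).
    unfold th in Hge.
    assert (0 <= t * (1 - mu v)) by (apply Rmult_le_pos; lra).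
    assert (0 <= (1 - t) * (1 - nu v)) by (apply Rmult_le_pos; lra).
    assert (E1 : mu v = 1) by (assert (t * (1 - mu v) = 0) by lra; apply Rmult_integral in H1; lra).
    assert (E2 : nu v = 1) by (assert ((1 - t) * (1 - nu v) = 0) by lra; apply Rmult_integral in H1; lra).
    split; intros r Hr; [rewrite (Hm4 r Hr) | rewrite (Hn4 r Hr)]; apply unit_weights_col; auto.
Qed.

Definition is_extremal (i : nat) : bool :=
  if excluded_middle_informative (extremal n m a i) then true else false.

Lemma is_extremalP i : reflect (extremal n m a i) (is_extremal i).
Proof. unfold is_extremal. destruct (excluded_middle_informative (extremal n m a i)); constructor; auto. Qed.

Lemma col_in_extremal_hull j : (j < m)%nat -> in_hull n m a is_extremal (a j).
Proof.
  enough (Main : forall N U, (ntrue m U <= N)%nat -> (forall k, (k < m)%nat -> in_hull n m a U (a k)) ->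
            forall j, (j < m)%nat -> in_hull n m a is_extremal (a j)).
  { apply (Main (ntrue m (fun _ => true)) (fun _ => true)); auto. intros k Hk. apply in_hull_col; auto. }
  clear j. induction N as [| N IHN]; intros U HN Hall j Hj;
    (destruct (classic (exists v, (v < m)%nat /\ U v = true /\ ~ extremal n m a v)) as [[v [Hv [HUv Hnv]]] | Hno];
     [| apply (in_hull_mono U); [| apply Hall; auto];
        intros k Hk HUk; destruct (is_extremalP k) as [| Hn]; [auto |];
        exfalso; apply Hno; exists k; auto]).
  - assert (H := ntrue_pos m U v Hv HUv). lia.
  - apply (IHN (remove U v)); auto.
    + assert (H := ntrue_remove_lt U v Hv HUv). lia.
    + intros k Hk. apply (in_hull_trans U); [apply Hall; auto |].
      intros k' Hk' HUk'. destruct (Nat.eq_dec k' v) as [-> | Hne].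
      * apply nonextremal_in_hull_remove; auto.
      * apply in_hull_col; auto. unfold remove. rewrite HUk'. simpl.
        destruct (Nat.eqb_spec k' v); [congruence | auto].
Qed.

End Hull.

(** * Linear systems with independent rows *)

Lemma dot_sub N u x y : dot N u (fun k => x k - y k) = dot N u x - dot N u y.
Proof. unfold dot. rewrite <- sumR_sub. apply sumR_ext. intros; ring. Qed.

Lemma dot_add N u x y : dot N u (fun k => x k + y k) = dot N u x + dot N u y.
Proof. unfold dot. rewrite <- sumR_add. apply sumR_ext. intros; ring. Qed.

Lemma dot_scal N u al x : dot N u (fun k => al * x k) = al * dot N u x.
Proof. unfold dot. rewrite <- sumR_scal_l. apply sumR_ext. intros; ring. Qed.

Lemma dot_sumR N u K F : dot N u (fun k => sumR K (fun l => F l k)) = sumR K (fun l => dot N u (F l)).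
Proof. unfold dot. rewrite <- sumR_swap. apply sumR_ext. intros k Hk. rewrite <- sumR_scal_l. auto. Qed.

Lemma dot_delta N u p : (p < N)%nat -> dot N u (delta p) = u p.
Proof.
  intros Hp. unfold dot. rewrite (sumR_ext N _ (fun k => delta p k * u k)) by (intros; ring).
  apply sumR_delta; auto.
Qed.

Section IndependentRows.
Variables (N m : nat) (B : nat -> nat -> R) (P : nat -> bool).
Hypothesis rows_indep : forall mu, (forall i, (i < m)%nat -> P i = false -> mu i = 0) ->
  (forall k, (k < N)%nat -> sumR m (fun i => mu i * B i k) = 0) -> forall i, (i < m)%nat -> mu i = 0.

Definition solves (K : nat) (v y : nat -> R) : Prop :=
  forall i, (i < K)%nat -> (i < m)%nat -> P i = true -> dot N (B i) v = y i.

(* With [V l] dual to the first [K] rows, the vectors [e_p - sum_l B l p * V l] are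
   orthogonal to them; if row [K] were orthogonal to all of these as well, it would be a
   combination of the first [K] rows. *)
Lemma rows_separate K V : (K < m)%nat -> P K = true -> (forall l, solves K (V l) (delta l)) ->
  exists q, solves K q (fun _ => 0) /\ dot N (B K) q <> 0.
Proof.
  intros HKm HPK HV.
  set (g := fun l => if Nat.ltb l m && P l then 1 else 0).
  set (yp := fun p k => delta p k - sumR K (fun l => g l * B l p * V l k)).
  assert (Hyp : forall p, (p < N)%nat -> solves K (yp p) (fun _ => 0)).
  { intros p Hp i Hi Him HP. unfold yp. rewrite dot_sub, dot_delta, dot_sumR by auto.
    rewrite (sumR_ext K _ (fun l => delta i l * (g l * B l p))).
    - rewrite sumR_delta by auto. unfold g. apply Nat.ltb_lt in Him. rewrite Him, HP. simpl. ring.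
    - intros l Hl. rewrite dot_scal, HV, delta_sym; auto. ring. }
  enough (Hex : exists p, (p < N)%nat /\ dot N (B K) (yp p) <> 0)
    by (destruct Hex as [p [Hp Hnz]]; exists (yp p); auto).
  apply NNPP. intros Hn.
  assert (Hall : forall p, (p < N)%nat -> dot N (B K) (yp p) = 0).
  { intros p Hp. apply NNPP. intros Hne. apply Hn. exists p. auto. }
  set (mu := fun i => delta K i - (if Nat.ltb i K then g i * dot N (B K) (V i) else 0)).
  assert (HmuK : mu K = 1).
  { unfold mu, delta. destruct (Nat.eq_dec K K); [| congruence]. rewrite Nat.ltb_irrefl. ring. }
  rewrite rows_indep in HmuK; auto; [lra | |].
  - intros i Hi HP. unfold mu, delta. destruct (Nat.eq_dec i K) as [-> |]; [congruence |].
    unfold g. rewrite HP, andb_false_r. destruct (Nat.ltb i K); ring.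
  - intros k Hk. assert (Hk0 := Hall k Hk). unfold yp in Hk0.
    rewrite dot_sub, dot_delta, dot_sumR in Hk0 by auto.
    unfold mu. rewrite (sumR_ext m _ (fun i => delta K i * B i k -
                          (if Nat.ltb i K then g i * dot N (B K) (V i) * B i k else 0))).
    2:{ intros i Hi. destruct (Nat.ltb i K); ring. }
    rewrite sumR_sub, sumR_delta by auto.
    replace m with (K + (m - K))%nat by lia. rewrite sumR_prefix.
    assert (E : sumR K (fun l => dot N (B K) (fun k0 => g l * B l k * V l k0)) =
                sumR K (fun i => g i * dot N (B K) (V i) * B i k)).
    { apply sumR_ext. intros l Hl. rewrite dot_scal. ring. }
    lra.
Qed.

Lemma rows_solvable K y : exists v, solves K v y.
Proof.
  revert y. induction K as [| K IHK]; intros y.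
  { exists (fun _ => 0). intros i Hi. lia. }
  destruct (IHK y) as [v0 Hv0].
  destruct (classic ((K < m)%nat /\ P K = true)) as [[HKm HPK] | Hno].
  2:{ exists v0. intros i Hi Him HP. destruct (Nat.eq_dec i K) as [-> | Hne].
      - exfalso; auto.
      - apply Hv0; auto; lia. }
  destruct (choice _ (fun l => IHK (delta l))) as [V HV].
  destruct (rows_separate K V HKm HPK HV) as [q [Hq Hnz]].
  set (al := (y K - dot N (B K) v0) / dot N (B K) q).
  exists (fun k => v0 k + al * q k). intros i Hi Him HP.
  rewrite dot_add, dot_scal. destruct (Nat.eq_dec i K) as [-> | Hne].
  - unfold al. field. auto.
  - rewrite Hv0, Hq; auto; try lia. ring.
Qed.

End IndependentRows.

(* The extremal columns, lifted to [(a_i, 1)], are linearly independent. *)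
Lemma extremal_affine_interp n m a : extreme_pts_aff_indep n m a ->
  forall y, exists x s, forall i, (i < m)%nat -> is_extremal n m a i = true -> dot n (a i) x + s = y i.
Proof.
  intros Hind y.
  set (Bm := fun i k => if Nat.ltb k n then a i k else 1).
  assert (Hdot : forall i v, dot (S n) (Bm i) v = dot n (a i) v + v n).
  { intros i v. unfold dot. simpl. unfold Bm at 2. rewrite Nat.ltb_irrefl, Rmult_1_l. f_equal.
    apply sumR_ext. intros k Hk. unfold Bm. apply Nat.ltb_lt in Hk. rewrite Hk. auto. }
  destruct (rows_solvable (S n) m Bm (is_extremal n m a)) with (K := m) (y := y) as [v Hv].
  - intros mu Hmu Hk. apply Hind.
    + intros i Hi Hne. apply Hmu; auto. destruct (is_extremalP n m a i); [contradiction | auto].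
    + rewrite <- (Hk n ltac:(lia)). apply sumR_ext. intros i Hi. unfold Bm. rewrite Nat.ltb_irrefl. ring.
    + intros k Hkn. rewrite <- (Hk k ltac:(lia)). apply sumR_ext. intros i Hi. unfold Bm.
      apply Nat.ltb_lt in Hkn. rewrite Hkn. auto.
  - exists v, (v n). intros i Hi HE. rewrite <- Hdot. apply Hv; auto.
Qed.

(** * SAGE and nonnegativity *)

Lemma C_SAGE_NNS n m a c : C_SAGE n m a c -> C_NNS n m a c.
Proof.
  intros [cs [Hage Hsum]] x. unfold Sig.
  rewrite (sumR_ext m _ (fun i => sumR m (fun k => cs k i * exp (dot n (a i) x)))).
  - rewrite <- sumR_swap. apply sumR_ge0. intros k Hk. apply (Hage k Hk).
  - intros i Hi. rewrite Hsum, sumR_scal_r by auto. reflexivity.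
Qed.

Lemma dot_convex_comb n m a x th j : vec_eq n (a j) (fun r => sumR m (fun k => th k * a k r)) ->
  dot n (a j) x = sumR m (fun k => th k * dot n (a k) x).
Proof.
  intros H. unfold dot. rewrite (sumR_ext n _ (fun r => sumR m (fun k => th k * (a k r * x r)))).
  - rewrite sumR_swap. apply sumR_ext. intros k Hk. rewrite sumR_scal_l. auto.
  - intros r Hr. rewrite H, <- sumR_scal_r by auto. apply sumR_ext. intros; ring.
Qed.

Lemma extremal_weights n m a : exists lam : nat -> nat -> R,
  (forall j i, 0 <= lam j i) /\
  (forall j, (j < m)%nat -> sumR m (lam j) = 1) /\
  (forall j i, (j < m)%nat -> (i < m)%nat -> lam j i <> 0 -> is_extremal n m a i = true) /\
  (forall j x, (j < m)%nat -> dot n (a j) x = sumR m (fun i => lam j i * dot n (a i) x)).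
Proof.
  assert (Hch : forall j, exists th : nat -> R, (forall k, 0 <= th k) /\ ((j < m)%nat ->
     (forall k, (k < m)%nat -> is_extremal n m a k = false -> th k = 0) /\ sumR m th = 1 /\
     vec_eq n (a j) (fun r => sumR m (fun k => th k * a k r)))).
  { intros j. destruct (classic (j < m)%nat) as [Hj | Hj].
    - destruct (col_in_extremal_hull n m a j Hj) as [th [H1 H2]]. exists th. auto.
    - exists (fun _ => 0). split; [intros; lra | intros; contradiction]. }
  destruct (choice _ Hch) as [lam Hlam]. exists lam. repeat split.
  - intros j i. apply (Hlam j).
  - intros j Hj. apply (Hlam j); auto.
  - intros j i Hj Hi Hne. destruct (is_extremal n m a i) eqn:E; auto.
    exfalso. apply Hne, (Hlam j); auto.
  - intros j x Hj. apply dot_convex_comb, (Hlam j); auto.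
Qed.

Section Decomposition.
Variables (n m : nat) (a : nat -> nat -> R) (c : nat -> R) (lam : nat -> nat -> R).
Hypothesis c_nonext : forall i, (i < m)%nat -> ~ extremal n m a i -> c i <= 0.
Hypothesis lam_sum1 : forall j, (j < m)%nat -> sumR m (lam j) = 1.
Hypothesis lam_supp : forall j i, (j < m)%nat -> (i < m)%nat -> lam j i <> 0 -> is_extremal n m a i = true.
Hypothesis lam_dot : forall j x, (j < m)%nat -> dot n (a j) x = sumR m (fun i => lam j i * dot n (a i) x).

Local Notation E := (is_extremal n m a).

Definition neg_coef (j : nat) : R := if Nat.ltb j m && negb (E j) then - c j else 0.

Lemma neg_coef_ge0 j : 0 <= neg_coef j.
Proof.
  unfold neg_coef. destruct (Nat.ltb_spec j m); simpl; [| lra].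
  destruct (is_extremalP n m a j); simpl; [lra |]. assert (c j <= 0) by auto. lra.
Qed.

Lemma hsig_eq_Sig z x s : (forall i, (i < m)%nat -> E i = true -> 0 < z i) ->
  (forall i, (i < m)%nat -> E i = false -> z i = 0) ->
  (forall i, (i < m)%nat -> E i = true -> dot n (a i) x + s = ln (z i)) ->
  hsig m c neg_coef lam z = exp s * Sig n m a c x.
Proof.
  intros Hpos Hzero Hx. unfold hsig, Sig. rewrite <- sumR_sub, <- sumR_scal_l.
  apply sumR_ext. intros i Hi. unfold neg_coef. apply Nat.ltb_lt in Hi as Hi'. rewrite Hi'.
  destruct (E i) eqn:HE; simpl.
  - rewrite <- (exp_ln (z i)), <- Hx, exp_plus by auto. ring.
  - rewrite Hzero, (lam_dot i x Hi) by auto.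
    rewrite geomean_exp by (intros k Hk Hne; apply Hpos, (lam_supp i k); auto).
    rewrite (sumR_ext m (fun k => lam i k * ln (z k)) (fun k => lam i k * dot n (a k) x + s * lam i k)).
    + rewrite sumR_add, sumR_scal_l, lam_sum1, Rmult_1_r, exp_plus by auto. ring.
    + intros k Hk. destruct (Req_EM_T (lam i k) 0) as [Z | Z]; [rewrite Z; ring |].
      rewrite <- (Hx k Hk (lam_supp i k Hi Hk Z)). ring.
Qed.

Lemma hsig_ge0_of_NNS : extreme_pts_aff_indep n m a -> C_NNS n m a c ->
  forall z, (forall i, (i < m)%nat -> E i = true -> 0 < z i) ->
            (forall i, (i < m)%nat -> E i = false -> z i = 0) -> 0 <= hsig m c neg_coef lam z.
Proof.
  intros Hind Hnns z Hpos Hzero.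
  destruct (extremal_affine_interp n m a Hind (fun i => ln (z i))) as [x [s Hx]].
  rewrite (hsig_eq_Sig z x s) by auto.
  apply Rmult_le_pos; [left; apply exp_pos | apply Hnns].
Qed.

(* The [k]-th AGE summand keeps [c_k] on the diagonal and, for nonextremal [k], the
   certificate row [ell k]; the extremal diagonal entries pay for all certificate rows. *)
Lemma C_SAGE_of_age_cert ell : age_cert m c neg_coef lam E ell -> C_SAGE n m a c.
Proof.
  intros [Hell_ge0 Hell_supp Hell_budget Hell_dom].
  set (ellN := fun j i => if E j then 0 else ell j i).
  assert (HellN : forall j i, 0 <= ellN j i) by (intros; unfold ellN; destruct (E j); auto; lra).
  set (used := fun k => if E k then sumR m (fun j => ellN j k) else 0).
  set (cs := fun k i => delta k i * (c k - used k) + ellN k i).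
  exists cs. split.
  - intros k Hk. split.
    + intros x. unfold Sig, cs.
      rewrite (sumR_ext m _ (fun i => delta k i * ((c k - used k) * exp (dot n (a k) x)) + ellN k i * exp (dot n (a i) x))).
      2:{ intros i Hi. unfold delta. destruct (Nat.eq_dec i k) as [-> |]; ring. }
      rewrite sumR_add, sumR_delta by auto. unfold used, ellN. destruct (E k) eqn:HE.
      * rewrite (sumR_eq0 m (fun i => 0 * _)) by (intros; ring).
        apply Rplus_le_le_0_compat; [| lra]. apply Rmult_le_pos; [| left; apply exp_pos].
        assert (sumR m (fun j => if E j then 0 else ell j k) <= c k); [| lra].
        eapply Rle_trans; [| apply (Hell_budget k Hk HE)].
        apply sumR_le. intros j _. destruct (E j); [apply Hell_ge0 | lra].
      * assert (H := Hell_dom k Hk (fun i Hi Hne => lam_supp k i Hk Hi Hne) (fun i => dot n (a i) x)).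
        cbv beta in H. rewrite <- (lam_dot k x Hk) in H. unfold neg_coef in H.
        apply Nat.ltb_lt in Hk as Hk'. rewrite Hk', HE in H. simpl in H. lra.
    + intros i Hi Hne. unfold cs, delta. destruct (Nat.eq_dec i k); [congruence |].
      assert (H := HellN k i). lra.
  - intros i Hi. unfold cs. rewrite sumR_add.
    rewrite (sumR_ext m _ (fun k => delta i k * (c k - used k))) by (intros; rewrite delta_sym; auto).
    rewrite sumR_delta by auto. unfold used. destruct (E i) eqn:HE; [ring |].
    rewrite sumR_eq0; [ring |]. intros k _. unfold ellN. destruct (E k); auto.
Qed.

End Decomposition.

Theorem mainTheorem8 (n m : nat) (a : nat -> nat -> R) :
  distinct_cols n m a ->
  extreme_pts_aff_indep n m a ->
  forall c : nat -> R,
    (forall i, (i < m)%nat -> ~ extremal n m a i -> c i <= 0) ->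
    (C_SAGE n m a c <-> C_NNS n m a c).
Proof.
  intros _ Hind c Hc. split; [apply C_SAGE_NNS |]. intros Hnns.
  destruct (extremal_weights n m a) as [lam [Hl [Hs [Hsupp Hdot]]]].
  destruct (age_cert_exists m c (neg_coef n m a c) lam Hl Hs (neg_coef_ge0 n m a c Hc)
              (is_extremal n m a) (hsig_ge0_of_NNS n m a c lam Hs Hsupp Hdot Hind Hnns))
    as [ell Hell].
  exact (C_SAGE_of_age_cert n m a c lam Hsupp Hdot ell Hell).
Qed.
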